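(* Let $\Theta\subset\mathbb{R}$ be a finite nonempty set of nonzero reals with $|\bar\theta|\in(0,\pi)$ for all $\bar\theta\in\Theta$, let $\bar\theta_M:=\max_{\bar\theta\in\Theta}|\bar\theta|$, and let $0<\gamma_\theta<\frac{4r_o\|p_d-p_o\|}{\pi^2}$. Set $\delta^*_{\mathcal{V}}:=\Big(\frac{2r_o\|p_d-p_o\|}{\pi^2}-\frac{\gamma_\theta}{2}\Big)\bar\theta_M^2$. Then for every $\delta_{\mathcal{V}}\in(0,\delta^*_{\mathcal{V}}]$, $\mathcal{V}_{nav}$ is a synergistic navigation function on $\mathcal{X}_p\times\mathbb{R}$ relative to $\mathcal{A}_p=\{(p_d,0)\}$ with gap exceeding $\delta_{\mathcal{V}}$, i.e. $\mathcal{V}_{nav}(p,\theta)-\min_{\bar\theta\in\Theta}\mathcal{V}_{nav}(p,\bar\theta)>\delta_{\mathcal{V}}$ for all $(p,\theta)\in C_{\mathcal{V}_{nav}}\setminus\mathcal{A}_p$.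
   Context: Obstacle $\mathcal{O}=\{z\in\mathbb{R}^2:\|z-p_o\|\le r_o\}$ with center $p_o\in\mathbb{R}^2$ and radius $r_o>0$; safety margin $\varepsilon>0$; free space $\mathcal{X}_p=\{p\in\mathbb{R}^2:\|p-p_o\|\ge r_o+\varepsilon\}$. Distance $d_o(p)=\|p-p_o\|-r_o$. Destination $p_d\in\mathcal{X}_p$, $r_d:=d_o(p_d)$, and $r_s\in(\varepsilon,r_d)$. Barrier $\phi(z)=(z-r_s)^2\ln(r_s/z)$ for $z\in(0,r_s]$ and $\phi(z)=0$ for $z>r_s$. Navigation function $V_{nav}(p)=\frac12\|p-p_d\|^2+\varrho\,\phi(d_o(p))$ with $\varrho>0$; $C_{V_{nav}}=\{p\in\mathcal{X}_p:\nabla_pV_{nav}(p)=0\}$. Rotation $\mathcal{R}(\theta)=\exp(\theta\Delta)=\begin{bmatrix}\cos\theta&-\sin\theta\\ \sin\theta&\cos\theta\end{bmatrix}$ with $\Delta=\begin{bmatrix}0&-1\\1&0\end{bmatrix}$. Transformation $\mathcal{T}(p,\theta)=p_o+\mathcal{R}(\theta)(p-p_o)$. Modified navigation function $\mathcal{V}_{nav}(p,\theta)=\frac12\|\mathcal{T}(p,\theta)-p_d\|^2+\varrho\phi(d_o(p))+\frac{\gamma_\theta}{2}\theta^2$. Critical set $C_{\mathcal{V}_{nav}}=\{(p,\theta)\in\mathcal{X}_p\times\mathbb{R}:\nabla_p\mathcal{V}_{nav}=0,\nabla_\theta\mathcal{V}_{nav}=0\}$ (which equals $C_{V_{nav}}\times\{0\}$).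 Definition: for finite nonempty $\Theta\subset\mathbb{R}$, a function $\mathcal{V}:\mathcal{X}_p\times\mathbb{R}\to\mathbb{R}_{\ge0}$ is a synergistic navigation function relative to $\mathcal{A}_p$ with gap exceeding $\delta_{\mathcal{V}}>0$ if $\mathcal{V}(p,\theta)-\min_{\bar\theta\in\Theta}\mathcal{V}(p,\bar\theta)>\delta_{\mathcal{V}}$ for all $(p,\theta)\in C_{\mathcal{V}}\setminus\mathcal{A}_p$. *)

From Stdlib Require Import Reals List.
From Coquelicot Require Import Coquelicot.
Open Scope R_scope.

Definition pt := (R * R)%type.

Definition dist2 (p q : pt) : R :=
  sqrt ((fst p - fst q) ^ 2 + (snd p - snd q) ^ 2).

Definition d_o (po : pt) (ro : R) (p : pt) : R := dist2 p po - ro.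

Definition in_Xp (po : pt) (ro eps : R) (p : pt) : Prop := dist2 p po >= ro + eps.

(* barrier phi(z) = (z - r_s)^2 ln(r_s/z) for z <= r_s, 0 for z > r_s
   (only evaluated at z = d_o(p) >= eps > 0 on X_p) *)
Definition phi (rs z : R) : R :=
  if Rle_dec z rs then (z - rs) ^ 2 * ln (rs / z) else 0.

Definition rot (th : R) (v : pt) : pt :=
  (cos th * fst v - sin th * snd v, sin th * fst v + cos th * snd v).

Definition Tr (po p : pt) (th : R) : pt :=
  let w := rot th (fst p - fst po, snd p - snd po) in
  (fst po + fst w, snd po + snd w).

Definition Vnav (po : pt) (ro rs : R) (pd : pt) (rho gam : R) (p : pt) (th : R) : R :=
  / 2 * (dist2 (Tr po p th) pd) ^ 2 + rho * phi rs (d_o po ro p) + gam / 2 * th ^ 2.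

Definition critical (po : pt) (ro eps rs : R) (pd : pt) (rho gam : R) (p : pt) (th : R) : Prop :=
  in_Xp po ro eps p /\
  is_derive (fun x => Vnav po ro rs pd rho gam (x, snd p) th) (fst p) 0 /\
  is_derive (fun y => Vnav po ro rs pd rho gam (fst p, y) th) (snd p) 0 /\
  is_derive (fun t => Vnav po ro rs pd rho gam p t) th 0.

Definition list_min (f : R -> R) (l : list R) : R :=
  match l with
  | nil => 0
  | a :: l' => fold_right (fun t m => Rmin (f t) m) (f a) l'
  end.

Definition list_max_abs (l : list R) : R :=
  match l with
  | nil => 0
  | a :: l' => fold_right (fun t m => Rmax (Rabs t) m) (Rabs a) l'
  end.

From Stdlib Require Import Reals Lra Lia Psatz List.
From Coquelicot Require Import Coquelicot.
Open Scope R_scope.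

(* Write p = (x, y), p_o = (o1, o2), p_d = (d1, d2), r = ||p - p_o||.
   1. The barrier phi is differentiable on (0, +oo) with a nonpositive
      derivative dphi, which vanishes beyond the influence radius rs.
   2. At a critical point of Vnav the p-gradient reads
      R(th)^T (T(p,th) - p_d) = -K (p - p_o) with K <= 0; substituting it in
      the th-derivative kills the rotational term, so gam th = 0 and th = 0.
      Then p_d - p_o = (1 + K)(p - p_o); excluding p = p_d and using
      rs < d_o(p_d), the factor m = 1 + K is negative: p lies on the far side
      of the obstacle, and ||p_d - p_o|| = -m r.
   3. For such p, Vnav(p, 0) - Vnav(p, t) = -m r^2 (1 - cos t) - gam t^2 / 2,
      and Jordan's inequality gives 1 - cos t >= 2 t^2 / pi^2 on [-pi, pi].
   4. Taking for t the element of Theta of largest magnitude and using r > ro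
      yields a gap strictly larger than (2 ro ||p_d - p_o|| / pi^2 - gam/2) t^2,
      hence larger than delta. *)

(* ln q <= q - 1, the tangent-line bound for the concave logarithm. *)
Lemma ln_le_sub_1 (q : R) : 0 < q -> ln q <= q - 1.
Proof.
  intros Hq. pose proof (exp_ineq1_le (ln q)) as H. rewrite exp_ln in H; lra.
Qed.

Lemma is_derive_zero_of_quadratic_bound (f : R -> R) (z0 r : R) :
  0 < r -> (forall z, Rabs (z - z0) < r -> Rabs (f z - f z0) <= (z - z0) ^ 2) ->
  is_derive f z0 0.
Proof.
  intros Hr Hbound. apply is_derive_Reals. intros e He.
  exists (mkposreal _ (Rmin_pos r e Hr He)). simpl. intros h Hh0 Hh.
  pose proof (Rmin_l r e). pose proof (Rmin_r r e).
  assert (Hfh : Rabs (f (z0 + h) - f z0) <= h ^ 2).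
  { replace h with (z0 + h - z0) at 2 by ring. apply Hbound.
    replace (z0 + h - z0) with h by ring. lra. }
  assert (Hhpos : 0 < Rabs h) by (apply Rabs_pos_lt; exact Hh0).
  rewrite Rminus_0_r, Rabs_div by exact Hh0.
  apply Rmult_lt_reg_r with (Rabs h); [exact Hhpos|].
  unfold Rdiv. rewrite Rmult_assoc, Rinv_l by lra.
  rewrite <- pow2_abs in Hfh. nra.
Qed.

Lemma is_derive_eq (f : R -> R) (x l1 l2 : R) :
  is_derive f x l1 -> is_derive f x l2 -> l1 = l2.
Proof. intros H1 H2. rewrite <- (is_derive_unique _ _ _ H1). exact (is_derive_unique _ _ _ H2). Qed.

Definition dphi (rs z : R) : R :=
  if Rle_dec z rs then 2 * (z - rs) * ln (rs / z) - (z - rs) ^ 2 / z else 0.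

Lemma phi_flat_at_rs (rs z : R) :
  0 < rs -> Rabs (z - rs) < rs / 2 -> Rabs (phi rs z - phi rs rs) <= (z - rs) ^ 2.
Proof.
  intros Hrs Hz. apply Rabs_def2 in Hz.
  unfold phi. destruct (Rle_dec rs rs) as [_|]; [|lra].
  replace (rs - rs) with 0 by ring. rewrite pow_i, Rmult_0_l, Rminus_0_r by lia.
  destruct (Rle_dec z rs) as [Hle|Hgt].
  - assert (Hq : 1 <= rs / z <= 2).
    { split; [apply Rmult_le_reg_r with z|apply Rmult_le_reg_r with z];
        try lra; field_simplify; lra. }
    assert (Hln0 : 0 <= ln (rs / z)) by (rewrite <- ln_1; apply ln_le; lra).
    assert (Hln1 : ln (rs / z) <= 1) by (pose proof (ln_le_sub_1 (rs / z)); lra).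
    pose proof (pow2_ge_0 (z - rs)).
    rewrite Rabs_right by nra. nra.
  - rewrite Rabs_R0. apply pow2_ge_0.
Qed.

(* phi is differentiable on (0, +oo) with derivative dphi; at z = rs both
   pieces glue with derivative 0. *)
Lemma phi_derive (rs z : R) : 0 < rs -> 0 < z -> is_derive (phi rs) z (dphi rs z).
Proof.
  intros Hrs Hz. destruct (Rtotal_order z rs) as [Hlt|[->|Hgt]].
  - apply (is_derive_ext_loc (fun t => (t - rs) ^ 2 * ln (rs / t))).
    + apply (filter_imp (fun t => 0 < t /\ t < rs)).
      * intros t [Ht0 Ht]. unfold phi. destruct (Rle_dec t rs); [reflexivity|lra].
      * apply filter_and; [apply (open_gt 0)|apply (open_lt rs)]; assumption.
    + unfold dphi. destruct (Rle_dec z rs) as [_|]; [|lra].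
      auto_derive.
      * repeat split; try lra. apply Rdiv_lt_0_compat; lra.
      * unfold Rdiv. field. lra.
  - unfold dphi. destruct (Rle_dec rs rs) as [_|]; [|lra].
    replace (2 * (rs - rs) * ln (rs / rs) - (rs - rs) ^ 2 / rs) with 0 by (field; lra).
    apply (is_derive_zero_of_quadratic_bound _ rs (rs / 2)); [lra|].
    intros t Ht. apply phi_flat_at_rs; assumption.
  - apply (is_derive_ext_loc (fun _ => 0)).
    + apply (filter_imp (fun t => rs < t)).
      * intros t Ht. unfold phi. destruct (Rle_dec t rs); [lra|reflexivity].
      * apply (open_gt rs); assumption.
    + unfold dphi. destruct (Rle_dec z rs); [lra|]. auto_derive; reflexivity.
Qed.

(* The derivative of phi in the form produced by auto_derive. *)
Lemma Derive_phi (rs z : R) : 0 < rs -> 0 < z -> Derive (fun t => phi rs t) z = dphi rs z.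
Proof. intros Hrs Hz. apply is_derive_unique. apply phi_derive; assumption. Qed.

Lemma dphi_nonpos (rs z : R) : 0 < rs -> 0 < z -> dphi rs z <= 0.
Proof.
  intros Hrs Hz. unfold dphi. destruct (Rle_dec z rs) as [Hle|_]; [|lra].
  assert (1 <= rs / z) by (apply Rmult_le_reg_r with z; [lra|]; field_simplify; lra).
  assert (0 <= ln (rs / z)) by (rewrite <- ln_1; apply ln_le; lra).
  assert (0 <= (z - rs) ^ 2 / z) by (apply Rdiv_le_0_compat; [apply pow2_ge_0|lra]).
  nra.
Qed.

Lemma dphi_active (rs z : R) : dphi rs z <> 0 -> z <= rs.
Proof. unfold dphi. destruct (Rle_dec z rs); [auto|tauto]. Qed.

Lemma cubic_le_sin_lb (a : R) : 0 <= a <= 1 -> a - a ^ 3 / 6 <= sin_lb a.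
Proof.
  intros Ha. unfold sin_lb, sin_approx, sin_term. simpl sum_f_R0. simpl Factorial.fact.
  assert (0 <= a ^ 5) by (apply pow_le; lra).
  assert (a ^ 7 <= a ^ 5).
  { replace (a ^ 7) with (a ^ 5 * (a * a)) by ring.
    assert (a * a <= 1) by nra. nra. }
  simpl. lra.
Qed.

Lemma quadratic_le_cos_lb (a : R) : 0 <= a <= 1 -> 1 - a ^ 2 / 2 <= cos_lb a.
Proof.
  intros Ha. unfold cos_lb, cos_approx, cos_term. simpl sum_f_R0. simpl Factorial.fact.
  assert (0 <= a ^ 4) by (apply pow_le; lra).
  assert (a ^ 6 <= a ^ 4).
  { replace (a ^ 6) with (a ^ 4 * (a * a)) by ring.
    assert (a * a <= 1) by nra. nra. }
  simpl. lra.
Qed.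

(* Jordan's inequality: sin lies above its chord 2x/pi on [0, pi/2].  On [0,1]
   use sin x >= x - x^3/6; on [1, pi/2] write sin x = cos (pi/2 - x) with
   pi/2 - x <= 1 and use cos y >= 1 - y^2/2. *)
Lemma jordan_inequality (x : R) : 0 <= x <= PI / 2 -> 2 * x / PI <= sin x.
Proof.
  intros Hx. pose proof PI2_3_2. pose proof PI_4.
  apply Rmult_le_reg_r with PI; [lra|].
  replace (2 * x / PI * PI) with (2 * x) by (field; lra).
  destruct (Rle_dec x 1) as [H1|H1].
  - pose proof (SIN x ltac:(lra) ltac:(lra)) as [Hs _].
    pose proof (cubic_le_sin_lb x ltac:(lra)).
    assert (x ^ 3 <= x).
    { replace (x ^ 3) with (x * (x * x)) by ring. nra. }
    nra.
  - rewrite <- cos_shift. set (y := PI / 2 - x).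
    pose proof (COS y ltac:(unfold y; lra) ltac:(unfold y; lra)) as [Hc _].
    pose proof (quadratic_le_cos_lb y ltac:(unfold y; lra)).
    assert (Ey : x = PI / 2 - y) by (unfold y; ring).
    assert (0 <= y <= 1) by (unfold y; lra).
    clearbody y. subst x. nra.
Qed.

(* Quadratic lower bound on the rotation gain: 1 - cos t >= 2 t^2 / pi^2 on
   [-pi, pi], via 1 - cos t = 2 sin^2 (|t|/2) and Jordan's inequality. *)
Lemma one_minus_cos_lower_bound (t : R) :
  Rabs t <= PI -> 2 * t ^ 2 / PI ^ 2 <= 1 - cos t.
Proof.
  intros Ht. pose proof PI2_3_2. pose proof (Rabs_pos t) as Habs.
  set (s := sin (Rabs t / 2)).
  assert (Hc : cos t = 1 - 2 * s * s).
  { unfold s. rewrite <- cos_2a_sin. replace (2 * (Rabs t / 2)) with (Rabs t) by field.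
    destruct (Rcase_abs t);
      [rewrite Rabs_left, cos_neg by lra|rewrite Rabs_right by lra]; reflexivity. }
  assert (Hs : Rabs t / PI <= s).
  { replace (Rabs t / PI) with (2 * (Rabs t / 2) / PI) by (field; lra).
    apply jordan_inequality. lra. }
  assert (0 <= Rabs t / PI) by (apply Rdiv_le_0_compat; lra).
  rewrite Hc, <- pow2_abs.
  replace (2 * Rabs t ^ 2 / PI ^ 2) with (2 * (Rabs t / PI) * (Rabs t / PI)) by (field; lra).
  nra.
Qed.

(* The synergy-gap estimate: if the target sits at distance nd from the
   obstacle center, opposite to a point at distance r > ro, then rotating by t
   gains nd r (1 - cos t) - gam t^2/2, which strictly exceeds any delta below
   (2 ro nd / pi^2 - gam/2) t^2. *)
Lemma rotation_gain_exceeds (nd r ro gam delta t : R) :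
  0 < ro < r -> 0 < nd -> 0 < Rabs t < PI ->
  delta <= (2 * ro * nd / PI ^ 2 - gam / 2) * t ^ 2 ->
  nd * r * (1 - cos t) - gam / 2 * t ^ 2 > delta.
Proof.
  intros Hr Hnd Ht Hdelta. pose proof PI_RGT_0 as Hpi.
  pose proof (one_minus_cos_lower_bound t ltac:(lra)) as Hcos.
  set (w := 2 * t ^ 2 / PI ^ 2) in *.
  assert (Hw : 0 < w).
  { unfold w. rewrite <- pow2_abs.
    apply Rdiv_lt_0_compat; [apply Rmult_lt_0_compat; [lra|]|]; apply pow_lt; lra. }
  assert (Hdelta' : delta <= nd * ro * w - gam / 2 * t ^ 2).
  { replace (nd * ro * w) with (2 * ro * nd / PI ^ 2 * t ^ 2) by (unfold w; field; lra). lra. }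
  assert (nd * ro * w < nd * r * w).
  { apply Rmult_lt_compat_r; [exact Hw|]. apply Rmult_lt_compat_l; lra. }
  assert (nd * r * w <= nd * r * (1 - cos t)).
  { apply Rmult_le_compat_l; [|exact Hcos]. apply Rmult_le_pos; lra. }
  lra.
Qed.

Lemma list_min_le (f : R -> R) (l : list R) (t : R) : In t l -> list_min f l <= f t.
Proof.
  destruct l as [|a l]; [simpl; tauto|]. simpl.
  revert t. induction l as [|b l IH]; intros t Ht; simpl.
  - destruct Ht as [->|[]]; lra.
  - destruct Ht as [->|[->|Ht]].
    + eapply Rle_trans; [apply Rmin_r|]. apply IH; auto.
    + apply Rmin_l.
    + eapply Rle_trans; [apply Rmin_r|]. apply IH; auto.
Qed.

Lemma list_max_abs_attained (l : list R) :
  l <> nil -> exists t, In t l /\ Rabs t = list_max_abs l.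
Proof.
  destruct l as [|a l]; [tauto|]. intros _. simpl.
  induction l as [|b l IH]; simpl.
  - exists a; auto.
  - destruct IH as [t [Ht Et]]. unfold Rmax. destruct (Rle_dec (Rabs b) _).
    + exists t. split; [|auto]. destruct Ht as [->|Ht]; auto.
    + exists b; auto.
Qed.

(* Pure algebra behind "critical points have zero angle": if (A, B) rotated by
   (C, S) equals -K (a, b), then the rotated pairing of (A, B) with the
   quarter-turn of (a, b) is -K (a b - b a) = 0, so the angular residue g
   vanishes. *)
Lemma rotational_term_vanishes (A B C S a b K g : R) :
  A * C + B * S + K * a = 0 -> - A * S + B * C + K * b = 0 ->
  A * (- S * a - C * b) + B * (C * a - S * b) + g = 0 -> g = 0.
Proof.
  intros H1 H2 H3.
  replace g with (A * (- S * a - C * b) + B * (C * a - S * b) + g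
                  - (a * (- A * S + B * C + K * b) - b * (A * C + B * S + K * a))) by ring.
  rewrite H1, H2, H3. ring.
Qed.

Section Navigation.
Variables (o1 o2 ro rs d1 d2 rho gam : R).

Definition err1 (x y th : R) : R := o1 + (cos th * (x - o1) - sin th * (y - o2)) - d1.
Definition err2 (x y th : R) : R := o2 + (sin th * (x - o1) + cos th * (y - o2)) - d2.

Definition radius (x y : R) : R := sqrt ((x - o1) ^ 2 + (y - o2) ^ 2).

Lemma radius_sq (x y : R) : radius x y ^ 2 = (x - o1) ^ 2 + (y - o2) ^ 2.
Proof. apply pow2_sqrt. pose proof (pow2_ge_0 (x - o1)). pose proof (pow2_ge_0 (y - o2)). lra. Qed.

Lemma Vnav_coord (x y th : R) :
  Vnav (o1, o2) ro rs (d1, d2) rho gam (x, y) th =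
  / 2 * (err1 x y th ^ 2 + err2 x y th ^ 2) + rho * phi rs (radius x y - ro) + gam / 2 * th ^ 2.
Proof.
  unfold Vnav, d_o, Tr, rot, dist2, err1, err2, radius; cbn [fst snd].
  rewrite pow2_sqrt; [reflexivity|].
  pose proof (pow2_ge_0 (o1 + (cos th * (x - o1) - sin th * (y - o2)) - d1)).
  pose proof (pow2_ge_0 (o2 + (sin th * (x - o1) + cos th * (y - o2)) - d2)). lra.
Qed.

(* auto_derive unfolds squares into products; this folds them back. *)
Lemma sq_sum_unfolded (a b : R) : a * (a * 1) + b * (b * 1) = a ^ 2 + b ^ 2.
Proof. ring. Qed.

Section Gradient.
Hypothesis Hrs : 0 < rs.
Variables (x y th : R).
Hypothesis Hro : 0 <= ro.
Hypothesis Hout : ro < radius x y.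

(* Away from the obstacle center, ||p - p_o||^2 > 0, so sqrt is differentiable. *)
Lemma radius_sq_pos : 0 < (x - o1) ^ 2 + (y - o2) ^ 2.
Proof. rewrite <- radius_sq. apply pow_lt. lra. Qed.

Lemma Vnav_derive_x :
  is_derive (fun x' => Vnav (o1, o2) ro rs (d1, d2) rho gam (x', y) th) x
    (err1 x y th * cos th + err2 x y th * sin th
     + rho * dphi rs (radius x y - ro) * ((x - o1) / radius x y)).
Proof.
  apply (is_derive_ext (fun x' => / 2 * (err1 x' y th ^ 2 + err2 x' y th ^ 2)
            + rho * phi rs (radius x' y - ro) + gam / 2 * th ^ 2)).
  { intro t. symmetry. apply Vnav_coord. }
  pose proof radius_sq_pos. unfold err1, err2, radius in *.
  auto_derive; change (x + - o1) with (x - o1); rewrite sq_sum_unfolded.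
  - repeat split; [|lra]. eexists. apply phi_derive; lra.
  - rewrite Derive_phi by lra. unfold Rminus in *. field. lra.
Qed.

Lemma Vnav_derive_y :
  is_derive (fun y' => Vnav (o1, o2) ro rs (d1, d2) rho gam (x, y') th) y
    (- err1 x y th * sin th + err2 x y th * cos th
     + rho * dphi rs (radius x y - ro) * ((y - o2) / radius x y)).
Proof.
  apply (is_derive_ext (fun y' => / 2 * (err1 x y' th ^ 2 + err2 x y' th ^ 2)
            + rho * phi rs (radius x y' - ro) + gam / 2 * th ^ 2)).
  { intro t. symmetry. apply Vnav_coord. }
  pose proof radius_sq_pos. unfold err1, err2, radius in *.
  auto_derive; change (y + - o2) with (y - o2); rewrite sq_sum_unfolded.
  - repeat split; [|lra]. eexists. apply phi_derive; lra.
  - rewrite Derive_phi by lra. unfold Rminus in *. field. lra.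
Qed.

End Gradient.

Lemma Vnav_derive_theta (x y th : R) :
  is_derive (fun t => Vnav (o1, o2) ro rs (d1, d2) rho gam (x, y) t) th
    (err1 x y th * (- sin th * (x - o1) - cos th * (y - o2))
     + err2 x y th * (cos th * (x - o1) - sin th * (y - o2)) + gam * th).
Proof.
  apply (is_derive_ext (fun t => / 2 * (err1 x y t ^ 2 + err2 x y t ^ 2)
            + rho * phi rs (radius x y - ro) + gam / 2 * t ^ 2)).
  { intro t. symmetry. apply Vnav_coord. }
  unfold err1, err2. auto_derive; [exact I|field].
Qed.

Lemma radius_scaled (m x y u v : R) :
  u - o1 = m * (x - o1) -> v - o2 = m * (y - o2) -> radius u v = Rabs m * radius x y.
Proof.
  intros Hu Hv. unfold radius. rewrite Hu, Hv.
  replace ((m * (x - o1)) ^ 2 + (m * (y - o2)) ^ 2) with (Rsqr m * ((x - o1) ^ 2 + (y - o2) ^ 2))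
    by (unfold Rsqr; ring).
  rewrite sqrt_mult, sqrt_Rsqr_abs; [reflexivity|apply Rle_0_sqr|].
  pose proof (pow2_ge_0 (x - o1)). pose proof (pow2_ge_0 (y - o2)). lra.
Qed.

(* At a critical point the gradient is zero:
   p-gradient:  R(th)^T (T(p,th) - p_d) + K (p - p_o) = 0,
                with K = rho phi'(d_o p) / ||p - p_o|| <= 0,
   th-gradient: <T(p,th) - p_d, Delta R(th) (p - p_o)> + gam th = 0.
   The first makes the rotational term of the second equal to
   -K <p - p_o, Delta (p - p_o)> = 0, hence th = 0; then p_d - p_o is the
   multiple (1 + K) of p - p_o, and K can only be nonzero inside the
   influence region of the barrier. *)
Lemma critical_point_equations (eps x y th : R) :
  0 < ro -> 0 < eps -> 0 < rs -> 0 < rho -> 0 < gam ->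
  critical (o1, o2) ro eps rs (d1, d2) rho gam (x, y) th ->
  th = 0 /\ exists K, K <= 0 /\ (K <> 0 -> radius x y - ro <= rs) /\
    d1 - o1 = (1 + K) * (x - o1) /\ d2 - o2 = (1 + K) * (y - o2).
Proof.
  intros Hro Heps Hrs Hrho Hgam [HX [Hdx [Hdy Hdth]]]. cbn [fst snd] in *.
  assert (Hout : ro < radius x y).
  { unfold in_Xp, dist2 in HX. cbn [fst snd] in HX. unfold radius. lra. }
  set (F := dphi rs (radius x y - ro)).
  set (K := rho * F / radius x y).
  assert (Ex : err1 x y th * cos th + err2 x y th * sin th + K * (x - o1) = 0).
  { rewrite <- (is_derive_eq _ _ _ _ (Vnav_derive_x Hrs x y th ltac:(lra) Hout) Hdx).
    unfold K, F. field. lra. }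
  assert (Ey : - err1 x y th * sin th + err2 x y th * cos th + K * (y - o2) = 0).
  { rewrite <- (is_derive_eq _ _ _ _ (Vnav_derive_y Hrs x y th ltac:(lra) Hout) Hdy).
    unfold K, F. field. lra. }
  pose proof (is_derive_eq _ _ _ _ (Vnav_derive_theta x y th) Hdth) as Eth.
  assert (Hth : th = 0).
  { pose proof (rotational_term_vanishes _ _ _ _ _ _ _ _ Ex Ey Eth). nra. }
  subst th. split; [reflexivity|]. exists K.
  unfold err1, err2 in Ex, Ey. rewrite cos_0, sin_0 in Ex, Ey.
  assert (HF : F <= 0) by (apply dphi_nonpos; lra).
  repeat split.
  - unfold K, Rdiv. apply Rmult_le_0_r; [nra|]. left. apply Rinv_0_lt_compat. lra.
  - intros HK. apply dphi_active. intros HF0. apply HK. unfold K, F. rewrite HF0. field. lra.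
  - nra.
  - nra.
Qed.

(* A critical point other than (p_d, 0) has th = 0 and lies on the far side of
   the obstacle: p_d - p_o = m (p - p_o) with m < 0.  Indeed K = 0 gives
   p = p_d, and 0 <= 1 + K <= 1 would put p_d inside the barrier's influence
   region, contradicting rs < d_o(p_d). *)
Lemma critical_point_antipodal (eps x y th : R) :
  0 < ro -> 0 < eps -> 0 < rs -> 0 < rho -> 0 < gam -> rs < radius d1 d2 - ro ->
  critical (o1, o2) ro eps rs (d1, d2) rho gam (x, y) th ->
  ((x, y), th) <> ((d1, d2), 0) ->
  th = 0 /\ exists m, m < 0 /\ d1 - o1 = m * (x - o1) /\ d2 - o2 = m * (y - o2).
Proof.
  intros Hro Heps Hrs Hrho Hgam Hpd Hcrit Hne.
  destruct (critical_point_equations eps x y th Hro Heps Hrs Hrho Hgam Hcrit)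
    as [-> [K [HK [Hin [Ex Ey]]]]].
  split; [reflexivity|]. exists (1 + K). repeat split; [|assumption|assumption].
  destruct (Req_dec K 0) as [HK0|HK0].
  { exfalso. apply Hne. rewrite HK0 in Ex, Ey. repeat f_equal; lra. }
  specialize (Hin HK0).
  destruct (Rlt_or_le (1 + K) 0) as [Hneg|Hnonneg]; [assumption|exfalso].
  pose proof (radius_scaled (1 + K) x y d1 d2 Ex Ey) as Hrad.
  rewrite Rabs_right in Hrad by lra.
  assert (0 <= radius x y) by apply sqrt_pos.
  nra.
Qed.

(* Rotating a point p with p_d - p_o = m (p - p_o) by t changes Vnav by
   m ||p - p_o||^2 (1 - cos t) + gam t^2 / 2: the barrier term is rotation
   invariant and only the attractive and angular terms move. *)
Lemma Vnav_rotation_gain (m x y t : R) :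
  d1 - o1 = m * (x - o1) -> d2 - o2 = m * (y - o2) ->
  Vnav (o1, o2) ro rs (d1, d2) rho gam (x, y) 0 - Vnav (o1, o2) ro rs (d1, d2) rho gam (x, y) t
  = - m * radius x y ^ 2 * (1 - cos t) - gam / 2 * t ^ 2.
Proof.
  intros Hx Hy. rewrite !Vnav_coord, radius_sq. unfold err1, err2.
  rewrite cos_0, sin_0.
  replace d1 with (o1 + m * (x - o1)) by lra. replace d2 with (o2 + m * (y - o2)) by lra.
  apply Rminus_diag_uniq.
  transitivity (/ 2 * ((x - o1) ^ 2 + (y - o2) ^ 2) * (1 - (sin t ^ 2 + cos t ^ 2))); [field|].
  rewrite <- !Rsqr_pow2, sin2_cos2. ring.
Qed.

End Navigation.

Theorem lemma3 (po pd : pt) (ro eps rs rho gam : R) (Theta : list R) :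
  0 < ro -> 0 < eps ->
  in_Xp po ro eps pd ->
  eps < rs -> rs < d_o po ro pd ->
  0 < rho ->
  Theta <> nil ->
  (forall t, In t Theta -> 0 < Rabs t < PI) ->
  0 < gam -> gam < 4 * ro * dist2 pd po / PI ^ 2 ->
  forall delta : R,
    0 < delta ->
    delta <= (2 * ro * dist2 pd po / PI ^ 2 - gam / 2) * (list_max_abs Theta) ^ 2 ->
    forall (p : pt) (th : R),
      critical po ro eps rs pd rho gam p th ->
      (p, th) <> (pd, 0) ->
      Vnav po ro rs pd rho gam p th
        - list_min (fun t => Vnav po ro rs pd rho gam p t) Theta > delta.
Proof.
  intros Hro Heps _ Hers Hrsd Hrho HTne HT Hgam _ delta _ Hdelta p th Hcrit Hne.
  destruct po as [o1 o2], pd as [d1 d2], p as [x y].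
  set (nd := radius o1 o2 d1 d2) in *.
  change (d_o (o1, o2) ro (d1, d2)) with (nd - ro) in Hrsd.
  change (dist2 (d1, d2) (o1, o2)) with nd in Hdelta.
  assert (Hr : ro + eps <= radius o1 o2 x y) by (destruct Hcrit as [HX _]; exact (Rge_le _ _ HX)).
  destruct (critical_point_antipodal o1 o2 ro rs d1 d2 rho gam eps x y th
              Hro Heps ltac:(lra) Hrho Hgam Hrsd Hcrit Hne) as [-> [m [Hm [Ex Ey]]]].
  assert (Hnd : nd = - m * radius o1 o2 x y).
  { unfold nd. rewrite (radius_scaled o1 o2 m x y d1 d2 Ex Ey), Rabs_left by lra. reflexivity. }
  (* Compare with the rotation in Theta of largest magnitude. *)
  destruct (list_max_abs_attained Theta HTne) as [tM [HtM EtM]].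
  rewrite <- EtM, pow2_abs in Hdelta.
  pose proof (list_min_le (fun t => Vnav (o1, o2) ro rs (d1, d2) rho gam (x, y) t) Theta tM HtM)
    as Hmin.
  pose proof (Vnav_rotation_gain o1 o2 ro rs d1 d2 rho gam m x y tM Ex Ey) as Hgain.
  pose proof (rotation_gain_exceeds nd (radius o1 o2 x y) ro gam delta tM
                ltac:(lra) ltac:(lra) (HT tM HtM) Hdelta) as Hgap.
  cbv beta in Hmin.
  replace (nd * radius o1 o2 x y) with (- m * radius o1 o2 x y ^ 2) in Hgap by (rewrite Hnd; ring).
  lra.
Qed.
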